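(* Let $M^7=\mathbb CP^2\times S^3=(\mathrm{SU}_3/\mathrm U_2)\times\mathrm{SU}_2$ with an invariant Riemannian metric $g=g_4+g_3$, where $g_4$ is a positive multiple $a$ of the Fubini–Study metric and $g_3=\sum_{i=1}^3c_i\,\beta^i\otimes\beta^i$ ($c_i>0$) for a left-invariant coframe $\beta^1,\beta^2,\beta^3$ on $\mathrm{SU}_2$ with $d\beta^1=-\beta^2\wedge\beta^3$, $d\beta^2=-\beta^3\wedge\beta^1$, $d\beta^3=-\beta^1\wedge\beta^2$. Let $\mathrm{vol}_3=\sqrt{c_1c_2c_3}\,\beta^1\wedge\beta^2\wedge\beta^3$, let $\omega$ be the invariant Kähler form of $(\mathbb CP^2,g_4)$, $\mathrm{vol}_4$ the volume form of $g_4$ for the orientation in which $\omega$ is anti-self-dual, and orient $M^7$ by $\mathrm{vol}_4\wedge\mathrm{vol}_3$. Then the $(\mathrm{SU}_3\times\mathrm{SU}_2)$-invariant special 3-forms $\phi$ on $(M^7,g)$ (i.e. $d\star_7\phi=0$ and $d\phi=f\star_7\phi$ for a constant $f$) are exactly the following: - if $f=0$: $\phi=b\,\mathrm{vol}_3$ with $b$ constant; - if $f\neq0$: $\phi=\omega\wedge\theta$ with $\theta=\sum_i\theta_i\beta^i$ ($\theta_i$ constants) satisfying $\big(f-\sqrt{c_1/(c_2c_3)}\big)\theta_1=0$, $\big(f-\sqrt{c_2/(c_3c_1)}\big)\theta_2=0$, $\big(f-\sqrt{c_3/(c_1c_2)}\big)\theta_3=0$.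
   Context: Hodge star $\star_7$ of $(M^7,g)$ defined by $\alpha\wedge\star\beta=\langle\alpha,\beta\rangle\mathrm{vol}$ with $\langle\alpha,\beta\rangle=\frac1{k!}g(\alpha,\beta)$ on $k$-forms and $\mathrm{vol}=\mathrm{vol}_4\wedge\mathrm{vol}_3$. Every invariant 3-form on $M^7$ has the form $\omega\wedge\theta+b\,\mathrm{vol}_3$ with $\theta$ a left-invariant 1-form on $\mathrm{SU}_2$ and $b$ constant. *)

(* Pointwise (at a base point) model of the algebra of
   (SU3 x SU2)-invariant differential forms on M^7 = CP^2 x S^3.
   Coframe at the base point, indexed by 'I_7:
     0,1,2,3 : f^1..f^4, an orthonormal coframe of the Fubini-Study metric
               adapted to the complex structure (so g_4 = a * sum f^i (x) f^i)
     4,5,6   : beta^1, beta^2, beta^3 (left-invariant coframe on SU_2). *)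
From HB Require Import structures.
From mathcomp Require Import all_boot all_order all_algebra.
Set Implicit Arguments. Unset Strict Implicit. Unset Printing Implicit Defensive.
Import Order.TTheory GRing.Theory Num.Theory.
Local Open Scope ring_scope.

Notation form7 R := {ffun {set 'I_7} -> R%type}.

Section Forms.
Variable R : rcfType.

Local Notation form := {ffun {set 'I_7} -> R}.

Definition fscale (x : R) (al : form) : form := [ffun K => x * al K].

(* e_I = e^{i1} /\ ... /\ e^{ik}, i1 < ... < ik *)
Definition ebasis (I : {set 'I_7}) : form := [ffun K => (K == I)%:R].

(* sign of the shuffle: e_I /\ e_J = sgnIJ I J e_(I u J) for disjoint I, J *)
Definition inversion_pair (I J : {set 'I_7}) (p : 'I_7 * 'I_7) : bool :=
  (p.1 \in I) && (p.2 \in J) && (p.2 < p.1)%N.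

Definition sgnIJ (I J : {set 'I_7}) : R :=
  (-1) ^+ #|[set p | inversion_pair I J p]|.

Definition wedge (al be : form) : form :=
  [ffun K => \sum_(I : {set 'I_7}) \sum_(J : {set 'I_7} |
       (I :&: J == set0) && (I :|: J == K)) sgnIJ I J * al I * be J].

Definition e1 (i : nat) : form := ebasis [set (inord i : 'I_7)].
Definition e2 (i j : nat) : form := wedge (e1 i) (e1 j).

(* exterior derivative on basic 1-forms:
   d f^i := 0 (only used through omega, which is closed),
   d beta^1 = - beta^2 /\ beta^3, d beta^2 = - beta^3 /\ beta^1,
   d beta^3 = - beta^1 /\ beta^2 *)
Definition d1 (k : 'I_7) : form :=
  match val k with
  | 4 => - e2 5 6
  | 5 => - e2 6 4
  | 6 => - e2 4 5
  | _ => 0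
  end.

(* Leibniz rule: d e_I = sum_{k in I} (-1)^{#{i in I, i<k}} d e^k /\ e_(I\k) *)
Definition dbasis (I : {set 'I_7}) : form :=
  \sum_(k in I) fscale ((-1) ^+ #|[set i in I | (i < k)%N]|) (wedge (d1 k) (ebasis (I :\ k))).

Definition dform (al : form) : form := \sum_(I : {set 'I_7}) fscale (al I) (dbasis I).

Variables (a c1 c2 c3 : R).

(* inverse metric g^{ii} on the coframe of g = a g_FS + sum c_i beta^i (x) beta^i *)
Definition ginv (i : 'I_7) : R :=
  match val i with
  | 4 => c1^-1 | 5 => c2^-1 | 6 => c3^-1 | _ => a^-1 end.

(* <al, be> = (1/k!) g(al, be) : the basis e_I is orthogonal with
   <e_I, e_I> = prod_{i in I} g^{ii} *)
Definition inner (al be : form) : R :=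
  \sum_(I : {set 'I_7}) al I * be I * \prod_(i in I) ginv i.

(* Kahler form of (CP^2, g_4), omega = a (f^1 f^2 - f^3 f^4), which is
   anti-self-dual for vol_4 = a^2 f^1 f^2 f^3 f^4 *)
Definition omega : form := fscale a (e2 0 1 - e2 2 3).
Definition vol4 : form := fscale (a ^+ 2) (ebasis [set i : 'I_7 | (i < 4)%N]).
Definition vol3 : form := fscale (Num.sqrt (c1 * c2 * c3)) (ebasis [set i : 'I_7 | (4 <= i)%N]).
Definition vol7 : form := wedge vol4 vol3.
Definition volcoef : R := a ^+ 2 * Num.sqrt (c1 * c2 * c3).

(* Hodge star: the linear map with al /\ *be = <al,be> vol7, i.e.
   * e_J = <e_J,e_J> volcoef sgn(J, J^c) e_(J^c) *)
Definition star (al : form) : form :=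
  \sum_(J : {set 'I_7}) fscale (al J * (\prod_(i in J) ginv i) * volcoef * sgnIJ J (~: J))
     (ebasis (~: J)).

Definition theta (t1 t2 t3 : R) : form := fscale t1 (e1 4) + fscale t2 (e1 5) + fscale t3 (e1 6).

Definition invariant3 (phi : form) : Prop :=
  exists t1 t2 t3 b, phi = wedge omega (theta t1 t2 t3) + fscale b vol3.

Definition special (f : R) (phi : form) : Prop :=
  dform (star phi) = 0 /\ dform phi = fscale f (star phi).

End Forms.

From HB Require Import structures.
From mathcomp Require Import all_boot all_order all_algebra.
From mathcomp Require Import ring.
Import Order.TTheory GRing.Theory Num.Theory.
Local Open Scope ring_scope.
Set Implicit Arguments. Unset Strict Implicit. Unset Printing Implicit Defensive.

(* As omega is closed and anti-self-dual,
     star (omega /\ beta^i) = - (1 / lambda_i) omega /\ beta^j /\ beta^k,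
       lambda_i = sqrt (c_i / (c_j c_k)),   star vol3 = vol4,
     d (omega /\ theta) = - omega /\ (theta_1 beta^23 + theta_2 beta^31 + theta_3 beta^12),
     d vol3 = 0.
   So star phi and d phi are invariant 4-forms omega /\ (2-form on SU_2) + y vol4, which
   are all closed: d star phi = 0 holds always, and comparing coefficients in
   d phi = f star phi gives f b = 0 and (f - lambda_i) theta_i = 0.
   Each identity between forms is checked coefficientwise by computation. *)

(* Subsets of 'I_7 are encoded as bit masks, since finsets do not reduce under cbv. *)
Definition idx7 : seq nat := iota 0 7.

Definition mask_set (l : seq bool) : {set 'I_7} := [set i : 'I_7 | nth false l i].
Definition mask_of (ks : seq nat) : seq bool := [seq has (Nat.eqb i) ks | i <- idx7].
Definition mask_or (l m : seq bool) : seq bool :=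
  [seq nth false l i || nth false m i | i <- idx7].
Definition mask_compl (l : seq bool) : seq bool := [seq ~~ nth false l i | i <- idx7].
Definition mask_del (l : seq bool) (k : nat) : seq bool :=
  [seq nth false l i && ~~ Nat.eqb i k | i <- idx7].
Definition mask_disjoint (l m : seq bool) : bool :=
  all (fun i => ~~ (nth false l i && nth false m i)) idx7.
Definition mask_eq (l m : seq bool) : bool :=
  all (fun i => Bool.eqb (nth false l i) (nth false m i)) idx7.
Definition mask_inversions (l m : seq bool) : nat :=
  sumn [seq sumn [seq nat_of_bool [&& nth false l i, nth false m j & Nat.ltb j i]
                 | j <- idx7] | i <- idx7].
Definition mask_count_lt (l : seq bool) (k : nat) : nat :=
  sumn [seq nat_of_bool (nth false l j && Nat.ltb j k) | j <- idx7].

Lemma big_ord7 (T : Type) (idx : T) (op : T -> T -> T) (F : nat -> T) :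
  \big[op/idx]_(i < 7) F i = foldr (fun i => op (F i)) idx idx7.
Proof. by rewrite -(big_mkord xpredT) /index_iota /= !big_cons big_nil. Qed.

Lemma sumn_idx7 (F : nat -> nat) : sumn [seq F i | i <- idx7] = (\sum_(i < 7) F i)%N.
Proof. by rewrite big_ord7 /idx7 /=. Qed.

Lemma ltbE (i j : nat) : Nat.ltb i j = (i < j)%N.
Proof.
by apply/idP/idP => [/PeanoNat.Nat.ltb_lt/ssrnat.ltP | /ssrnat.ltP/PeanoNat.Nat.ltb_lt].
Qed.

Lemma eqbE (i j : nat) : Nat.eqb i j = (i == j).
Proof. by apply/idP/eqP => /PeanoNat.Nat.eqb_eq. Qed.

Lemma nth_idx7 (T : Type) (x0 : T) (F : nat -> T) (i : 'I_7) :
  nth x0 [seq F j | j <- idx7] i = F i.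
Proof. by rewrite (nth_map 0%N) ?size_iota // nth_iota. Qed.

Lemma in_mask_set l (i : 'I_7) : (i \in mask_set l) = nth false l i.
Proof. by rewrite inE. Qed.

Lemma mask_set1 k : (k < 7)%N -> mask_set (mask_of [:: k]) = [set inord k].
Proof.
by move=> hk; apply/setP => i; rewrite !inE nth_idx7 /= orbF eqbE -val_eqE /= inordK.
Qed.

Lemma mask_setU l m : mask_set l :|: mask_set m = mask_set (mask_or l m).
Proof. by apply/setP => i; rewrite !inE nth_idx7. Qed.

Lemma mask_setC l : ~: mask_set l = mask_set (mask_compl l).
Proof. by apply/setP => i; rewrite !inE nth_idx7. Qed.

Lemma mask_setD1 l (k : 'I_7) : mask_set l :\ k = mask_set (mask_del l k).
Proof. by apply/setP => i; rewrite !inE nth_idx7 eqbE andbC. Qed.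

Lemma mask_setI0 l m : (mask_set l :&: mask_set m == set0) = mask_disjoint l m.
Proof.
apply/eqP/allP => [H i | H].
  rewrite mem_iota add0n => /andP[_ hi].
  by have := in_set0 (Ordinal hi); rewrite -H !inE => /negbT.
by apply/setP => i; rewrite !inE; apply/negbTE/H; rewrite mem_iota /=.
Qed.

Lemma eq_mask_set l m : (mask_set l == mask_set m) = mask_eq l m.
Proof.
apply/eqP/allP => [H i | H].
  rewrite mem_iota add0n => /andP[_ hi].
  have /setP/(_ (Ordinal hi)) := H; rewrite !inE /= => ->.
  by case: (nth false m i).
apply/setP => i; rewrite !inE.
have := H i; rewrite mem_iota /= ltn_ord => /(_ isT).
by case: (nth false l i); case: (nth false m i).
Qed.

Lemma card_inversions_mask l m :
  #|[set p | inversion_pair (mask_set l) (mask_set m) p]| = mask_inversions l m.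
Proof.
rewrite -[LHS]muln1 -sum_nat_cond_const big_mkcond /= /mask_inversions sumn_idx7.
rewrite (eq_bigr _ (fun i _ => sumn_idx7 _)) pair_bigA; apply: eq_bigr => -[i j] _.
by rewrite /inversion_pair /= !in_mask_set ltbE -andbA; case: (_ && _).
Qed.

Lemma card_lt_mask l (k : 'I_7) :
  #|[set i in mask_set l | (i < k)%N]| = mask_count_lt l k.
Proof.
rewrite -[LHS]muln1 -sum_nat_cond_const big_mkcond /=.
rewrite /mask_count_lt sumn_idx7; apply: eq_bigr => i _.
by rewrite !inE ltbE; case: (_ && _).
Qed.

Section Forms.
Variable R : rcfType.
Local Notation form := {ffun {set 'I_7} -> R}.
Implicit Types (x y z : form) (c : R).

Lemma fscaleA c1 c2 x : fscale c1 (fscale c2 x) = fscale (c1 * c2) x.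
Proof. by apply/ffunP => K; rewrite !ffunE mulrA. Qed.
Lemma fscale1 x : fscale 1 x = x.
Proof. by apply/ffunP => K; rewrite !ffunE mul1r. Qed.
Lemma fscaleN1 x : fscale (-1) x = - x.
Proof. by apply/ffunP => K; rewrite !ffunE mulN1r. Qed.
Lemma fscale0 x : fscale 0 x = 0.
Proof. by apply/ffunP => K; rewrite !ffunE mul0r. Qed.
Lemma fscaler0 c : fscale c (0 : form) = 0.
Proof. by apply/ffunP => K; rewrite !ffunE mulr0. Qed.
Lemma fscaleDl c1 c2 x : fscale (c1 + c2) x = fscale c1 x + fscale c2 x.
Proof. by apply/ffunP => K; rewrite !ffunE mulrDl. Qed.
Lemma fscaleDr c x y : fscale c (x + y) = fscale c x + fscale c y.
Proof. by apply/ffunP => K; rewrite !ffunE mulrDr. Qed.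
Lemma fscale_sumr (I : Type) (r : seq I) (P : pred I) c (F : I -> form) :
  fscale c (\sum_(i <- r | P i) F i) = \sum_(i <- r | P i) fscale c (F i).
Proof.
apply/ffunP => K; rewrite ffunE !sum_ffunE mulr_sumr.
by apply: eq_bigr => i _; rewrite ffunE.
Qed.

Lemma wedgeDl x y z : wedge (x + y) z = wedge x z + wedge y z.
Proof.
apply/ffunP => K; rewrite !ffunE -big_split; apply: eq_bigr => I _.
by rewrite -big_split; apply: eq_bigr => J _; rewrite !ffunE mulrDr mulrDl.
Qed.
Lemma wedgeDr x y z : wedge z (x + y) = wedge z x + wedge z y.
Proof.
apply/ffunP => K; rewrite !ffunE -big_split; apply: eq_bigr => I _.
by rewrite -big_split; apply: eq_bigr => J _; rewrite !ffunE mulrDr.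
Qed.
Lemma wedgeZl c x z : wedge (fscale c x) z = fscale c (wedge x z).
Proof.
apply/ffunP => K; rewrite !ffunE mulr_sumr; apply: eq_bigr => I _.
by rewrite mulr_sumr; apply: eq_bigr => J _; rewrite !ffunE; ring.
Qed.
Lemma wedgeZr c x z : wedge z (fscale c x) = fscale c (wedge z x).
Proof.
apply/ffunP => K; rewrite !ffunE mulr_sumr; apply: eq_bigr => I _.
by rewrite mulr_sumr; apply: eq_bigr => J _; rewrite !ffunE; ring.
Qed.
Lemma wedge0l z : wedge 0 z = 0.
Proof. by rewrite -[in LHS](fscale0 0) wedgeZl fscale0. Qed.
Lemma wedge0r z : wedge z 0 = 0.
Proof. by rewrite -[in LHS](fscale0 0) wedgeZr fscale0. Qed.

Lemma wedge_ebasis I J : wedge (ebasis R I) (ebasis R J) =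
  if I :&: J == set0 then fscale (sgnIJ R I J) (ebasis R (I :|: J)) else 0.
Proof.
apply/ffunP => K; rewrite /wedge ffunE (bigD1 I) //= [X in _ + X]big1 ?addr0; last first.
  by move=> I' /negbTE hI; apply: big1 => J' _; rewrite !ffunE hI mulr0 mul0r.
rewrite big_mkcond (bigD1 J) //= big1 ?addr0; last first.
  by move=> J' /negbTE hJ; rewrite !ffunE hJ mulr0; case: ifP.
rewrite !ffunE !eqxx !mulr1.
case: (I :&: J == set0); rewrite !ffunE //.
by rewrite [K == _]eq_sym; case: (_ == K); rewrite ?mulr1 ?mulr0.
Qed.

Lemma dformD x y : dform (x + y) = dform x + dform y.
Proof. by rewrite /dform -big_split; apply: eq_bigr => I _; rewrite ffunE fscaleDl. Qed.
Lemma dformZ c x : dform (fscale c x) = fscale c (dform x).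
Proof. by rewrite /dform fscale_sumr; apply: eq_bigr => I _; rewrite ffunE fscaleA. Qed.
Lemma dform0 : dform (0 : form) = 0.
Proof. by rewrite -[in LHS](fscale0 0) dformZ fscale0. Qed.
Lemma dform_ebasis I : dform (ebasis R I) = dbasis R I.
Proof.
rewrite /dform (bigD1 I) //= big1 ?addr0; first by rewrite /ebasis ffunE eqxx fscale1.
by move=> J /negbTE hJ; rewrite /ebasis ffunE hJ fscale0.
Qed.

Variables (a c1 c2 c3 : R).
Local Notation star := (star a c1 c2 c3).

Lemma starD x y : star (x + y) = star x + star y.
Proof.
by rewrite /star -big_split; apply: eq_bigr => I _; rewrite ffunE !mulrDl fscaleDl.
Qed.
Lemma starZ c x : star (fscale c x) = fscale c (star x).
Proof.
by rewrite /star fscale_sumr; apply: eq_bigr => I _; rewrite ffunE fscaleA !mulrA.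
Qed.
Lemma star0 : star 0 = 0.
Proof. by rewrite -[in LHS](fscale0 0) starZ fscale0. Qed.
Lemma star_ebasis I : star (ebasis R I) =
  fscale ((\prod_(i in I) ginv a c1 c2 c3 i) * volcoef a c1 c2 c3 * sgnIJ R I (~: I))
         (ebasis R (~: I)).
Proof.
rewrite /star (bigD1 I) //= [X in _ + X]big1 ?addr0.
  by rewrite /ebasis ffunE eqxx mul1r.
by move=> J /negbTE hJ; rewrite /ebasis ffunE hJ !mul0r fscale0.
Qed.

End Forms.

Section Terms.
Variable R : rcfType.
Local Notation form := {ffun {set 'I_7} -> R}.
Local Notation terms := (seq (R * seq bool)).
Implicit Types (s : terms) (l m : seq bool) (c : R).

Definition sgn (n : nat) : R := if odd n then -1 else 1.

Lemma signr_sgn (n : nat) : (-1) ^+ n = sgn n.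
Proof. by rewrite -signr_odd /sgn; case: odd; rewrite ?expr1 ?expr0. Qed.

Definition form_of s : form :=
  foldr (fun p x => fscale p.1 (ebasis R (mask_set p.2)) + x) 0 s.

Definition scale_terms c s : terms := [seq (c * p.1, p.2) | p <- s].

Definition wedge_sign l m : R :=
  if mask_disjoint l m then sgn (mask_inversions l m) else 0.

Definition wedge_terms s1 s2 : terms :=
  [seq (p.1 * q.1 * wedge_sign p.2 q.2, mask_or p.2 q.2) | p <- s1, q <- s2].

Definition coef_terms s m : R :=
  foldr (fun p x => (if mask_eq m p.2 then p.1 else 0) + x) 0 s.

Lemma form_of1 c l : form_of [:: (c, l)] = fscale c (ebasis R (mask_set l)).
Proof. by rewrite /= addr0. Qed.

Lemma addr_form_of s1 s2 : form_of s1 + form_of s2 = form_of (s1 ++ s2).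
Proof. by elim: s1 => [|p s1 IH] /=; rewrite ?add0r // -IH addrA. Qed.

Lemma fscale_form_of c s : fscale c (form_of s) = form_of (scale_terms c s).
Proof. by elim: s => [|p s IH] /=; rewrite ?fscaler0 // fscaleDr IH fscaleA. Qed.

Lemma oppr_form_of s : - form_of s = form_of (scale_terms (-1) s).
Proof. by rewrite -fscale_form_of fscaleN1. Qed.

Lemma form_of_flatten (ss : seq terms) :
  form_of (flatten ss) = foldr (fun s x => form_of s + x) 0 ss.
Proof. by elim: ss => [|s ss IH] //=; rewrite -addr_form_of IH. Qed.

Lemma wedge_ebasis_mask l m :
  wedge (ebasis R (mask_set l)) (ebasis R (mask_set m)) =
  fscale (wedge_sign l m) (ebasis R (mask_set (mask_or l m))).
Proof.
rewrite wedge_ebasis mask_setI0 mask_setU /wedge_sign /sgnIJ card_inversions_mask signr_sgn.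
by case: mask_disjoint; rewrite ?fscale0.
Qed.

Lemma wedge_form_of s1 s2 : wedge (form_of s1) (form_of s2) = form_of (wedge_terms s1 s2).
Proof.
elim: s1 => [|p s1 IH] /=; first by rewrite wedge0l.
rewrite wedgeDl wedgeZl IH -addr_form_of; congr (_ + _); clear IH.
elim: s2 => [|q s2 IH2] /=; first by rewrite wedge0r fscaler0.
by rewrite wedgeDr wedgeZr fscaleDr IH2 wedge_ebasis_mask !fscaleA.
Qed.

Lemma e1_form_of i : (i < 7)%N -> e1 R i = form_of [:: (1, mask_of [:: i])].
Proof. by move=> hi; rewrite form_of1 fscale1 mask_set1. Qed.

Definition d1_terms (k : nat) : terms :=
  match k with
  | 4 => wedge_terms [:: (-1, mask_of [:: 5]%N)] [:: (1, mask_of [:: 6]%N)]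
  | 5 => wedge_terms [:: (-1, mask_of [:: 6]%N)] [:: (1, mask_of [:: 4]%N)]
  | 6 => wedge_terms [:: (-1, mask_of [:: 4]%N)] [:: (1, mask_of [:: 5]%N)]
  | _ => [::]
  end.

Lemma d1_form_of (k : 'I_7) : d1 R k = form_of (d1_terms k).
Proof.
case: k => [[|[|[|[|[|[|[|//]]]]]]] hk] //; rewrite /d1 /d1_terms /=;
by rewrite /e2 !e1_form_of // wedge_form_of /= !addr0 -fscaleN1 fscaleA !mulr1 ?mul1r.
Qed.

Definition dbasis_terms l : terms :=
  flatten [seq if nth false l k then
                 scale_terms (sgn (mask_count_lt l k))
                   (wedge_terms (d1_terms k) [:: (1, mask_del l k)])
               else [::] | k <- idx7].

Definition d_terms s : terms := flatten [seq scale_terms p.1 (dbasis_terms p.2) | p <- s].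

Lemma dbasis_form_of l : dbasis R (mask_set l) = form_of (dbasis_terms l).
Proof.
rewrite /dbasis big_mkcond /= /dbasis_terms form_of_flatten foldr_map -big_ord7.
apply: eq_bigr => k _; rewrite in_mask_set; case: nth => //.
by rewrite -fscale_form_of -wedge_form_of form_of1 fscale1 -d1_form_of
  card_lt_mask mask_setD1 signr_sgn.
Qed.

Lemma dform_form_of s : dform (form_of s) = form_of (d_terms s).
Proof.
elim: s => [|p s IH] /=; first by rewrite dform0.
by rewrite dformD dformZ dform_ebasis IH dbasis_form_of fscale_form_of addr_form_of.
Qed.

Variables (a c1 c2 c3 : R).

Definition ginv_nat (i : nat) : R :=
  match i with 4 => c1^-1 | 5 => c2^-1 | 6 => c3^-1 | _ => a^-1 end.

Definition ginv_mask l : R :=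
  foldr (fun i x => (if nth false l i then ginv_nat i else 1) * x) 1 idx7.

Definition star_terms s : terms :=
  [seq (p.1 * (ginv_mask p.2 * volcoef a c1 c2 c3 *
               sgn (mask_inversions p.2 (mask_compl p.2))), mask_compl p.2) | p <- s].

Lemma prod_ginv_mask l : \prod_(i in mask_set l) ginv a c1 c2 c3 i = ginv_mask l.
Proof.
by rewrite big_mkcond /= /ginv_mask -big_ord7; apply: eq_bigr => i _; rewrite in_mask_set.
Qed.

Lemma star_form_of s : star a c1 c2 c3 (form_of s) = form_of (star_terms s).
Proof.
elim: s => [|p s IH] /=; first by rewrite star0.
rewrite starD starZ IH star_ebasis fscaleA prod_ginv_mask mask_setC /sgnIJ.
by rewrite card_inversions_mask signr_sgn.
Qed.

Lemma form_of_coef s m : form_of s (mask_set m) = coef_terms s m.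
Proof.
elim: s => [|p s IH] /=; first by rewrite ffunE.
by rewrite !ffunE IH eq_mask_set; case: mask_eq; rewrite ?mulr1 ?mulr0.
Qed.

Lemma form_of_ext s s' :
  foldr (fun l P => coef_terms s l = coef_terms s' l /\ P) True (map snd (s ++ s')) ->
  form_of s = form_of s'.
Proof.
set L := map snd _ => hL; apply/ffunP => K.
have coef_eq l : l \in L -> coef_terms s l = coef_terms s' l.
  by elim: L hL => [|x L IHL] //= [hx hL]; rewrite inE => /orP[/eqP ->|/IHL]; auto.
have [/hasP[l /coef_eq hl /eqP ->]|hK] := boolP (has (fun l => K == mask_set l) L).
  by rewrite !form_of_coef.
have form_of_out t : {subset map snd t <= L} -> form_of t K = 0.
  elim: t => [|p t IHt] hsub /=; first by rewrite ffunE.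
  rewrite !ffunE IHt => [|x hx]; last by apply: hsub; rewrite inE hx orbT.
  case: eqP => [hp|]; last by rewrite mulr0 addr0.
  by case/hasP: hK; exists p.2; [apply: hsub; rewrite inE eqxx | rewrite hp].
by rewrite !form_of_out // => x hx; rewrite /L map_cat mem_cat hx ?orbT.
Qed.

End Terms.

(* Numerals of type nat parsed in ring_scope, such as the indices in [omega] and
   [theta], are [n%:R], which cbv cannot reduce; [natr0E], [natr1E] and [natn] turn
   them back into constructors. *)
Ltac reify_forms :=
  rewrite ?(natr0E, natr1E, natn)
          ?(fscale_form_of, addr_form_of, oppr_form_of, wedge_form_of,
            star_form_of, dform_form_of).

Ltac eval_terms :=
  cbv [foldr map cat fst snd flatten coef_terms scale_terms wedge_terms star_terms
       d_terms dbasis_terms d1_terms ginv_mask ginv_nat wedge_sign sgn volcoef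
       mask_of mask_or mask_compl mask_del mask_disjoint mask_eq mask_inversions
       mask_count_lt idx7 iota nth all has sumn addn Nat.add Nat.ltb Nat.leb Nat.eqb
       negb andb orb Bool.eqb nat_of_bool odd].

Lemma sqrt_div_mul (R : rcfType) (x y z : R) : 0 < x -> 0 < y -> 0 < z ->
  Num.sqrt (x / (y * z)) = x / Num.sqrt (x * y * z).
Proof.
move=> hx hy hz; have hs : 0 < Num.sqrt (x * y * z) by rewrite sqrtr_gt0 !mulr_gt0.
rewrite -(ger0_norm (ltW (divr_gt0 hx hs))) -sqrtr_sqr expr_div_n sqr_sqrtr; last first.
  by rewrite ltW // !mulr_gt0.
by congr Num.sqrt; field; rewrite !lt0r_neq0.
Qed.

Lemma eigen_coefP (F : fieldType) (l f t : F) :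
  l != 0 -> - t = f * - (t / l) <-> (f - l) * t = 0.
Proof.
move=> l0; rewrite mulrN; split => [/oppr_inj h | h].
  have -> : (f - l) * t = (f * (t / l) - t) * l by field.
  by rewrite -h subrr mul0r.
have -> : f * (t / l) = t + (f - l) * t / l by field.
by rewrite h mul0r addr0.
Qed.

Section InvariantForms.
Variables (R : rcfType) (a c1 c2 c3 : R).
Local Notation form := {ffun {set 'I_7} -> R}.

Definition theta2 (x1 x2 x3 : R) : form :=
  fscale x1 (e2 R 5 6) + fscale x2 (e2 R 6 4) + fscale x3 (e2 R 4 5).

Definition invariant4 (x1 x2 x3 y : R) : form :=
  wedge (omega a) (theta2 x1 x2 x3) + fscale y (vol4 a).

Lemma vol4_form_of : vol4 a = form_of [:: (a ^+ 2, mask_of [:: 0; 1; 2; 3]%N)].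
Proof.
rewrite form_of1; congr (fscale _ (ebasis _ _)); apply/setP => i; rewrite !inE.
by case: i => [[|[|[|[|[|[|[|//]]]]]]] ?].
Qed.

Lemma vol3_form_of :
  vol3 c1 c2 c3 = form_of [:: (Num.sqrt (c1 * c2 * c3), mask_of [:: 4; 5; 6]%N)].
Proof.
rewrite form_of1; congr (fscale _ (ebasis _ _)); apply/setP => i; rewrite !inE.
by case: i => [[|[|[|[|[|[|[|//]]]]]]] ?].
Qed.

Lemma dform_invariant3 t1 t2 t3 b :
  dform (wedge (omega a) (theta t1 t2 t3) + fscale b (vol3 c1 c2 c3)) =
  invariant4 (- t1) (- t2) (- t3) 0.
Proof.
rewrite /invariant4 /omega /theta /theta2 /e2 vol3_form_of vol4_form_of !e1_form_of //.
by reify_forms; apply: form_of_ext; eval_terms; repeat split; ring.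
Qed.

Lemma dform_invariant4 x1 x2 x3 y : dform (invariant4 x1 x2 x3 y) = 0.
Proof.
rewrite /invariant4 /omega /theta2 /e2 vol4_form_of !e1_form_of // -[RHS]/(form_of [::]).
by reify_forms; apply: form_of_ext; eval_terms; repeat split; ring.
Qed.

Lemma fscale_invariant4 f x1 x2 x3 y :
  fscale f (invariant4 x1 x2 x3 y) = invariant4 (f * x1) (f * x2) (f * x3) (f * y).
Proof.
rewrite /invariant4 /omega /theta2 /e2 vol4_form_of !e1_form_of //.
by reify_forms; apply: form_of_ext; eval_terms; repeat split; ring.
Qed.

Lemma invariant4_coef x1 x2 x3 y :
  [/\ invariant4 x1 x2 x3 y (mask_set (mask_of [:: 0; 1; 5; 6]%N)) = a * x1,
      invariant4 x1 x2 x3 y (mask_set (mask_of [:: 0; 1; 4; 6]%N)) = - (a * x2),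
      invariant4 x1 x2 x3 y (mask_set (mask_of [:: 0; 1; 4; 5]%N)) = a * x3 &
      invariant4 x1 x2 x3 y (mask_set (mask_of [:: 0; 1; 2; 3]%N)) = a ^+ 2 * y].
Proof.
rewrite /invariant4 /omega /theta2 /e2 vol4_form_of !e1_form_of //.
by reify_forms; rewrite !form_of_coef; eval_terms; split; ring.
Qed.

Hypotheses (ha : 0 < a) (hc1 : 0 < c1) (hc2 : 0 < c2) (hc3 : 0 < c3).

Local Notation s := (Num.sqrt (c1 * c2 * c3)).
Local Notation l1 := (Num.sqrt (c1 / (c2 * c3))).
Local Notation l2 := (Num.sqrt (c2 / (c3 * c1))).
Local Notation l3 := (Num.sqrt (c3 / (c1 * c2))).

Let s_gt0 : 0 < s. Proof. by rewrite sqrtr_gt0 !mulr_gt0. Qed.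
Let l1E : l1 = c1 / s. Proof. exact: sqrt_div_mul. Qed.
Let l2E : l2 = c2 / s.
Proof. by rewrite sqrt_div_mul // [c2 * c3 * c1]mulrC mulrA. Qed.
Let l3E : l3 = c3 / s.
Proof. by rewrite sqrt_div_mul // (_ : c3 * c1 * c2 = c1 * c2 * c3) //; ring. Qed.

Lemma star_invariant3 t1 t2 t3 b :
  star a c1 c2 c3 (wedge (omega a) (theta t1 t2 t3) + fscale b (vol3 c1 c2 c3)) =
  invariant4 (- (t1 / l1)) (- (t2 / l2)) (- (t3 / l3)) b.
Proof.
rewrite l1E l2E l3E.
(* [field] cannot use [s ^+ 2 = c1 * c2 * c3], so it is supplied by hand. *)
rewrite [in RHS](_ : b = b * (s ^+ 2 / (c1 * c2 * c3))); last first.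
  by rewrite sqr_sqrtr ?divff ?mulr1 // ?lt0r_neq0 ?ltW // !mulr_gt0.
rewrite /invariant4 /omega /theta /theta2 /e2 vol3_form_of vol4_form_of !e1_form_of //.
reify_forms; apply: form_of_ext; eval_terms.
by repeat split; field; rewrite ?lt0r_neq0.
Qed.

Lemma invariant4_inj x1 x2 x3 y x1' x2' x3' y' :
  invariant4 x1 x2 x3 y = invariant4 x1' x2' x3' y' ->
  [/\ x1 = x1', x2 = x2', x3 = x3' & y = y'].
Proof.
have a0 : a != 0 := lt0r_neq0 ha.
move=> E; have [e1 e2 e3 e4] := invariant4_coef x1 x2 x3 y.
have [e1' e2' e3' e4'] := invariant4_coef x1' x2' x3' y'.
rewrite E in e1 e2 e3 e4; split.
- by apply: (mulfI a0); rewrite -e1 e1'.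
- by apply: (mulfI a0); apply: oppr_inj; rewrite -e2 e2'.
- by apply: (mulfI a0); rewrite -e3 e3'.
- by apply: (mulfI (expf_neq0 2 a0)); rewrite -e4 e4'.
Qed.

Lemma special_invariant3 f t1 t2 t3 b :
  special a c1 c2 c3 f (wedge (omega a) (theta t1 t2 t3) + fscale b (vol3 c1 c2 c3)) <->
  [/\ f * b = 0, (f - l1) * t1 = 0, (f - l2) * t2 = 0 & (f - l3) * t3 = 0].
Proof.
have [l1_neq0 l2_neq0 l3_neq0] : [/\ l1 != 0, l2 != 0 & l3 != 0].
  by split; rewrite lt0r_neq0 // sqrtr_gt0 divr_gt0 ?mulr_gt0.
rewrite /special star_invariant3 dform_invariant3 dform_invariant4 fscale_invariant4.
split => [[_ /invariant4_inj[e1 e2 e3 e4]] | [e4 e1 e2 e3]].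
  by split; rewrite -?e4 // -eigen_coefP.
split=> //; rewrite e4.
by congr invariant4; apply/eigen_coefP.
Qed.

End InvariantForms.

Lemma wedge_omega_theta0 (R : rcfType) (a : R) : wedge (omega a) (theta 0 0 0) = 0.
Proof. by rewrite /theta !fscale0 !addr0 wedge0r. Qed.

Unset Implicit Arguments.

Theorem proposition5p1 (R : rcfType) (a c1 c2 c3 : R)
  (ha : 0 < a) (hc1 : 0 < c1) (hc2 : 0 < c2) (hc3 : 0 < c3)
  (f : R) (phi : form7 R) :
  invariant3 a c1 c2 c3 phi ->
  (special a c1 c2 c3 f phi <->
   (if f == 0 then exists b : R, phi = fscale b (vol3 c1 c2 c3)
    else exists t1 t2 t3 : R,
      phi = wedge (omega a) (theta t1 t2 t3) /\
      (f - Num.sqrt (c1 / (c2 * c3))) * t1 = 0 /\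
      (f - Num.sqrt (c2 / (c3 * c1))) * t2 = 0 /\
      (f - Num.sqrt (c3 / (c1 * c2))) * t3 = 0)).
Proof.
move=> [t1 [t2 [t3 [b ->]]]].
have [-> | f0] := eqVneq f 0; split.
- rewrite special_invariant3 // => -[_ h1 h2 h3]; exists b.
  have coef0 (x y z t : R) : 0 < x -> 0 < y -> 0 < z ->
      (0 - Num.sqrt (x / (y * z))) * t = 0 -> t = 0.
    move=> hx hy hz /eqP; rewrite mulf_eq0 sub0r oppr_eq0 gt_eqF => [/eqP //|].
    by rewrite sqrtr_gt0 divr_gt0 ?mulr_gt0.
  rewrite (coef0 _ _ _ _ hc1 hc2 hc3 h1) (coef0 _ _ _ _ hc2 hc3 hc1 h2).
  by rewrite (coef0 _ _ _ _ hc3 hc1 hc2 h3) wedge_omega_theta0 add0r.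
- move=> [b' ->]; rewrite -[fscale b' _]add0r -(wedge_omega_theta0 a).
  by rewrite special_invariant3 // !mul0r !mulr0.
- rewrite special_invariant3 // => -[/eqP hb h1 h2 h3]; exists t1, t2, t3.
  move: hb; rewrite mulf_eq0 (negbTE f0) => /eqP ->.
  by rewrite fscale0 addr0.
- move=> [t1' [t2' [t3' [-> [h1 [h2 h3]]]]]].
  rewrite -[wedge _ _]addr0 -(fscale0 (vol3 c1 c2 c3)) special_invariant3 //.
  by rewrite mulr0.
Qed.
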